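(* Let $G$ be a finite group acting (via a homomorphism $\Gamma_G: G \to S_A$) on a finite set $A = X \sqcup Y$ of cardinality $n$, and suppose the action is partition-preserving. Let $\Omega = \Omega_X \sqcup \Omega_Y$ be a set of colors, with weight functions $\omega_X:\Omega_X\to\mathbb{N}^+$ and $\omega_Y:\Omega_Y\to\mathbb{N}^+$ having only finitely many colors of each weight, and let $f_X$, $f_Y$ be their generating functions. Let $\Phi$ be the set of valid colorings of $A$. Then the action of $G$ on $A$ induces an action on $\Phi$ given by $(g\varphi)(a) = \varphi(ga)$, and, as formal power series, $$\sum_{w\ge 0} \#\{\text{orbits of } G \text{ on } \Phi \text{ consisting of colorings of total weight } w\}\, x^w \;=\; \tilde Z_G\big(f_X(x), f_X(x^2),\ldots, f_X(x^n), f_Y(x), f_Y(x^2),\ldots, f_Y(x^n)\big).$$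
   Context: For a finite set $A$, $S_A$ is the group of bijections $A\to A$; every element of $S_A$ decomposes uniquely (up to order) into pairwise disjoint cycles. An action $\Gamma_G$ of $G$ on $A = X\sqcup Y$ is partition-preserving if for all $g\in G$ and $a\in A$: $ga\in X \iff a\in X$ and $ga\in Y\iff a\in Y$; equivalently every cycle of every $\Gamma_G(g)$ lies entirely in $X$ or entirely in $Y$. For $g\in G$, $C_k^X(g)$ (resp. $C_k^Y(g)$) denotes the number of $k$-cycles in the disjoint cycle decomposition of $\Gamma_G(g)$ contained in $X$ (resp. $Y$), where fixed points count as 1-cycles. The bipartite cycle index is the polynomial $$\tilde Z_G(x_1,\ldots,x_n,y_1,\ldots,y_n) = \frac{1}{|G|}\sum_{g\in G} x_1^{C_1^X(g)}\cdots x_n^{C_n^X(g)}\, y_1^{C_1^Y(g)}\cdots y_n^{C_n^Y(g)}.$$ For a weight function $\omega:\Omega'\to\mathbb{N}$ with $|\omega^{-1}(i)|$ finite for all $i$, its generating function is $f_\omega(x)=\sum_{i\ge 0}|\omega^{-1}(i)|\,x^i$. A coloring $\varphi: A\to\Omega_X\sqcup\Omega_Y$ is valid if $\varphi(a)\in\Omega_X\iff a\in X$ and $\varphi(a)\in\Omega_Y\iff a\in Y$. The total weight of a valid coloring $\varphi$ is $\sum_{a\in X}\omega_X(\varphi(a)) + \sum_{a\in Y}\omega_Y(\varphi(a))$. *)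

From HB Require Import structures.
From mathcomp Require Import all_boot all_order all_algebra all_fingroup.
Set Implicit Arguments. Unset Strict Implicit. Unset Printing Implicit Defensive.
Import GRing.Theory Num.Theory.
Local Open Scope ring_scope.

Definition ps := nat -> rat.
Definition psone : ps := fun n => (n == 0%N)%:R.
Definition psmul (f g : ps) : ps :=
  fun n => \sum_(i < n.+1) f i * g (n - i)%N.
Definition psexp (f : ps) (k : nat) : ps := iter k (psmul f) psone.
Definition psprod (s : seq ps) : ps := foldr psmul psone s.
(* f(x^k) for k >= 1 *)
Definition pssubst_pow (f : ps) (k : nat) : ps :=
  fun n => if (k %| n)%N then f (n %/ k)%N else 0.

Definition ncycles_in (A : finType) (s : {perm A}) (B : {set A}) (k : nat) : nat :=
  #|[set c in porbits s | (#|c| == k) && (c \subset B)]|.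

(* Bipartite cycle index evaluated at
   x_k := fX(x^k), y_k := fY(x^k), k = 1..#|A|, as a formal power series. *)
Definition bip_cycle_index_subst (gT : finGroupType) (G : {group gT}) (A : finType)
  (Gamma : gT -> {perm A}) (X Y : {set A}) (fX fY : ps) : ps :=
  fun w => (#|G|%:R)^-1 * \sum_(g in G)
     psprod ([seq psexp (pssubst_pow fX k) (ncycles_in (Gamma g) X k)
               | k <- iota 1 #|A|] ++
             [seq psexp (pssubst_pow fY k) (ncycles_in (Gamma g) Y k)
               | k <- iota 1 #|A|]) w.

(* f is the generating function of the weight function om:
   f i = |om^{-1}(i)| (each fiber finite). *)
Definition is_genfun (O : Type) (om : O -> nat) (f : nat -> nat) : Prop :=
  forall i, exists e : 'I_(f i) -> O,
    injective e /\ forall c, om c = i <-> exists j, e j = c.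

Definition coloring (A : Type) (OX OY : Type) := A -> OX + OY.

Definition is_inl (OX OY : Type) (c : OX + OY) : bool :=
  if c is inl _ then true else false.

Definition valid_coloring (A : finType) (OX OY : Type) (X Y : {set A})
  (phi : coloring A OX OY) : Prop :=
  forall a, ((a \in X) = is_inl (phi a)) /\ ((a \in Y) = ~~ is_inl (phi a)).

Definition color_weight (OX OY : Type) (omX : OX -> nat) (omY : OY -> nat)
  (c : OX + OY) : nat :=
  match c with inl x => omX x | inr y => omY y end.

Definition total_weight (A : finType) (OX OY : Type) (omX : OX -> nat)
  (omY : OY -> nat) (phi : coloring A OX OY) : nat :=
  (\sum_(a : A) color_weight omX omY (phi a))%N.

Definition act_coloring (A : finType) (OX OY : Type) (s : {perm A})
  (phi : coloring A OX OY) : coloring A OX OY := fun a => phi (s a).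

Definition same_orbit (gT : finGroupType) (G : {group gT}) (A : finType)
  (OX OY : Type) (Gamma : gT -> {perm A}) (phi psi : coloring A OX OY) : Prop :=
  exists2 g, g \in G & psi = act_coloring (Gamma g) phi.

(* The set {phi | P phi} is the union of exactly n orbits of the relation R
   (R an orbit relation): there are n pairwise non-related representatives
   in P, and every element of P is related to one of them. *)
Definition num_orbits (T : Type) (P : T -> Prop) (R : T -> T -> Prop) (n : nat)
  : Prop :=
  exists r : 'I_n -> T,
    (forall i, P (r i)) /\
    (forall i j, R (r i) (r j) -> i = j) /\
    (forall t, P t -> exists i, R (r i) t).

(* For a fixed weight w only the colours of weight at most w can occur, so the
   colourings of total weight w are the colourings F : A -> C by a finite set C
   of colours, on which G acts by (g F)(a) = F (g^-1 a).  Burnside's lemma counts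
   the orbits as the average number of colourings fixed by g.  A colouring fixed
   by g is constant on the cycles of g, and each cycle lies in X or in Y; hence
   the generating polynomial of the valid fixed colourings is a product over the
   cycles, a k-cycle in X contributing f_X(x^k) and one in Y contributing
   f_Y(x^k).  The truncated series operations only see coefficients up to x^w,
   so this product computes the substituted cycle index at x^w. *)

From HB Require Import structures.
From mathcomp Require Import all_boot all_order all_algebra all_fingroup.
From Stdlib Require Import FunctionalExtensionality.
Import GRing.Theory Num.Theory.
Local Open Scope ring_scope.
Set Implicit Arguments. Unset Strict Implicit. Unset Printing Implicit Defensive.

Section SeriesModulo.
Variable w : nat.

Definition ps_eq_upto (f g : ps) := forall n, (n <= w)%N -> f n = g n.

Definition ps_of_poly (p : {poly rat}) : ps := fun n => p`_n.

Lemma psmul_eq_upto f1 f2 g1 g2 :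
  ps_eq_upto f1 f2 -> ps_eq_upto g1 g2 -> ps_eq_upto (psmul f1 g1) (psmul f2 g2).
Proof.
move=> ef eg n le_nw; apply: eq_bigr => i _.
have le_in : (i <= n)%N by rewrite -ltnS.
by rewrite ef ?eg ?(leq_trans le_in) ?(leq_trans (leq_subr i n)).
Qed.

Lemma psmul_poly_upto f g p q :
  ps_eq_upto f (ps_of_poly p) -> ps_eq_upto g (ps_of_poly q) ->
  ps_eq_upto (psmul f g) (ps_of_poly (p * q)).
Proof. by move=> ef eg n le_nw; rewrite (psmul_eq_upto ef eg) // /ps_of_poly coefM. Qed.

Lemma psone_poly_upto : ps_eq_upto psone (ps_of_poly 1).
Proof. by move=> n _; rewrite /ps_of_poly coef1. Qed.

Lemma psexp_poly_upto f p m :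
  ps_eq_upto f (ps_of_poly p) -> ps_eq_upto (psexp f m) (ps_of_poly (p ^+ m)).
Proof.
move=> ef; elim: m => [|m IHm]; first exact: psone_poly_upto.
by rewrite /psexp iterS exprS; apply: psmul_poly_upto.
Qed.

Lemma psprod_poly_upto (I : eqType) (r : seq I) (F : I -> ps) (P : I -> {poly rat}) :
  {in r, forall i, ps_eq_upto (F i) (ps_of_poly (P i))} ->
  ps_eq_upto (psprod (map F r)) (ps_of_poly (\prod_(i <- r) P i)).
Proof.
elim: r => [|i r IHr] eFP; first by rewrite big_nil; exact: psone_poly_upto.
rewrite big_cons; apply: psmul_poly_upto; first by apply: eFP; rewrite mem_head.
by apply: IHr => j rj; apply: eFP; rewrite inE rj orbT.
Qed.

Lemma psprod_cat_poly_upto (I : eqType) (r1 r2 : seq I) (F1 F2 : I -> ps)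
    (P1 P2 : I -> {poly rat}) :
  {in r1, forall i, ps_eq_upto (F1 i) (ps_of_poly (P1 i))} ->
  {in r2, forall i, ps_eq_upto (F2 i) (ps_of_poly (P2 i))} ->
  ps_eq_upto (psprod (map F1 r1 ++ map F2 r2))
    (ps_of_poly (\prod_(i <- r1) P1 i * \prod_(i <- r2) P2 i)).
Proof.
move=> eFP1 eFP2; elim: r1 eFP1 => [|i r1 IHr1] eFP1.
  by rewrite big_nil mul1r; apply: psprod_poly_upto.
rewrite big_cons -mulrA; apply: psmul_poly_upto; first by apply: eFP1; rewrite mem_head.
by apply: IHr1 => j r1j; apply: eFP1; rewrite inE r1j orbT.
Qed.

Definition genfun_poly (f : nat -> nat) (k : nat) : {poly rat} :=
  \sum_(i < w.+1) (f i)%:R *: 'X^(k * i).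

Lemma pssubst_pow_poly f k : (0 < k)%N ->
  ps_eq_upto (pssubst_pow (fun i => (f i)%:R) k) (ps_of_poly (genfun_poly f k)).
Proof.
move=> k_gt0 n le_nw; rewrite /ps_of_poly /pssubst_pow coef_sum.
under eq_bigr => i _ do rewrite coefZ coefXn.
case: ifP => [/dvdnP [q n_qk] | kNn]; first subst n.
  have lt_qw : (q < w.+1)%N.
    by rewrite ltnS (leq_trans _ le_nw) // leq_pmulr.
  rewrite (bigD1 (Ordinal lt_qw)) //= mulnK // mulnC eqxx mulr1 big1 ?addr0 //.
  move=> i /eqP ne_iq; rewrite eqn_pmul2l //.
  by case: eqP => [q_i | _]; [case: ne_iq; apply: val_inj | rewrite mulr0].
rewrite big1 // => i _; case: eqP => [n_ki|_]; last by rewrite mulr0.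
by move: kNn; rewrite n_ki dvdn_mulr.
Qed.

End SeriesModulo.

Lemma coef_sum_Xn (R : nzRingType) (T : finType) (P : pred T) (f : T -> nat) n :
  (\sum_(t | P t) 'X^(f t) : {poly R})`_n = #|[pred t | P t & f t == n]|%:R.
Proof.
rewrite coef_sum -sum1_card natr_sum big_mkcondr /=.
by apply: eq_bigr => t _; rewrite coefXn eq_sym; case: (_ == _).
Qed.

Section PermOrbits.
Variables (A : finType) (s : {perm A}).

Lemma porbit_subset (B : {set A}) a :
  {homo s : x / x \in B} -> (porbit s a \subset B) = (a \in B).
Proof.
move=> sB; apply/subsetP/idP => [sub | aB b /porbitP [i ->]].
  exact: sub _ (porbit_id s a).
by elim: i => [|i IHi]; rewrite ?perm1 // expgSr permM sB.
Qed.

Lemma porbit_const (T : Type) (F : A -> T) a b :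
  (forall x, F (s x) = F x) -> b \in porbit s a -> F b = F a.
Proof.
move=> Fs /porbitP [i ->].
by elim: i => [|i IHi]; rewrite ?perm1 // expgSr permM Fs.
Qed.

Lemma mem_porbits a : porbit s a \in porbits s.
Proof. exact: imset_f. Qed.

Lemma card_porbits_mem_iota c : c \in porbits s -> #|c| \in iota 1 #|A|.
Proof.
by case/imsetP=> a _ ->; rewrite mem_iota lt0n card_porbit_neq0 add1n ltnS max_card.
Qed.

Lemma prod_porbits_by_card (R : comRingType) (P : pred {set A}) (G : nat -> R) :
  \prod_(c in porbits s | P c) G #|c| =
  \prod_(k <- iota 1 #|A|) G k ^+ #|[set c in porbits s | (#|c| == k) && P c]|.
Proof.
under [RHS]eq_bigr => k _ do rewrite -prodr_const.
rewrite (exchange_big_dep (fun c => (c \in porbits s) && P c)) /=; last first.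
  by move=> k c _; rewrite inE => /andP [-> /andP [_ ->]].
apply: eq_bigr => c /andP [sc Pc].
rewrite -big_filter (eq_filter (a2 := pred1 #|c|)); last first.
  by move=> k; rewrite /= inE sc Pc andbT eq_sym.
by rewrite filter_pred1_uniq ?iota_uniq ?card_porbits_mem_iota // big_seq1.
Qed.
End PermOrbits.

Section FixedColorings.
Variables (A : finType) (X : {set A}) (C : finType) (isl : C -> bool) (wt : C -> nat).

Definition valid_ffun (F : {ffun A -> C}) := [forall a, isl (F a) == (a \in X)].
Definition ffun_weight (F : {ffun A -> C}) := (\sum_a wt (F a))%N.

Variable s : {perm A}.

Lemma prod_porbits_cycle_type (R : comRingType) : {mono s : x / x \in X} ->
  \prod_(c in porbits s) \sum_(j | isl j == (c \subset X)) 'X^(#|c| * wt j) =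
  \prod_(k <- iota 1 #|A|) (\sum_(j | isl j) 'X^(k * wt j)) ^+ ncycles_in s X k *
  \prod_(k <- iota 1 #|A|) (\sum_(j | ~~ isl j) 'X^(k * wt j)) ^+ ncycles_in s (~: X) k
  :> {poly R}.
Proof.
move=> sXm; rewrite (bigID (fun c : {set A} => c \subset X)) /=; congr (_ * _).
  rewrite -prod_porbits_by_card; apply: eq_bigr => c /andP [_ cX].
  by apply: eq_bigl => j; rewrite cX eqb_id.
have subC c : c \in porbits s -> (c \subset ~: X) = ~~ (c \subset X).
  have homoX : {homo s : x / x \in X} by move=> x; rewrite sXm.
  have homoCX : {homo s : x / x \in ~: X} by move=> x; rewrite !inE sXm.
  by case/imsetP=> a _ ->; rewrite (porbit_subset _ homoCX) (porbit_subset _ homoX) inE.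
rewrite -prod_porbits_by_card; apply: eq_big => [c | c /andP [sc cY]].
  by case sc: (c \in porbits s); rewrite //= subC.
by apply: eq_bigl => j; rewrite (negbTE cY) eqbF_neg.
Qed.

Hypothesis sX : {homo s : x / x \in X}.

Definition perm_fixed (F : {ffun A -> C}) := [forall a, F (s a) == F a].

Definition orbit_coloring (h : {ffun {set A} -> C}) : {ffun A -> C} :=
  [ffun a => h (porbit s a)].

Lemma ffun_weight_orbit_coloring h :
  ffun_weight (orbit_coloring h) = (\sum_(c in porbits s) #|c| * wt (h c))%N.
Proof.
rewrite /ffun_weight (partition_big (porbit s) [in porbits s]) => [|a _]; last first.
  exact: imset_f.
apply: eq_bigr => _ /imsetP [a _ ->].
rewrite (eq_bigr (fun=> wt (h (porbit s a)))) => [|b /eqP <-]; last by rewrite ffunE.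
by rewrite sum_nat_const; congr (_ * _)%N; apply: eq_card => b; rewrite -eq_porbit_mem.
Qed.

(* The default j0 off the cycles of s puts the image in the pfamily of
   big_distr_big_dep. *)
Definition cycle_colors (j0 : C) (F : {ffun A -> C}) : {ffun {set A} -> C} :=
  [ffun c : {set A} => oapp F j0 [pick a in c | c \in porbits s]].

Lemma cycle_colors_out j0 F c : c \notin porbits s -> cycle_colors j0 F c = j0.
Proof. by move=> nsc; rewrite ffunE; case: pickP => // a /andP [_ sc]; case/negP: nsc. Qed.

Lemma cycle_colors_porbits j0 F c : c \in porbits s ->
  exists2 a, cycle_colors j0 F c = F a & porbit s a = c.
Proof.
move=> sc; rewrite ffunE; case: pickP => [a /andP [ca _] | none]; last first.
  by have /imsetP [a _ c_a] := sc; have := none a; rewrite c_a porbit_id -c_a sc.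
by exists a => //; apply/eqP; case/imsetP: sc ca => b _ ->; rewrite eq_porbit_mem.
Qed.

Lemma orbit_coloring_fixed h : perm_fixed (orbit_coloring h).
Proof.
by apply/forallP => a; rewrite !ffunE -[s a]/((s ^+ 1)%g a) porbit_perm.
Qed.

Lemma cycle_colorsK j0 F : perm_fixed F -> orbit_coloring (cycle_colors j0 F) = F.
Proof.
move=> /forallP Fs; apply/ffunP => a; rewrite ffunE.
have [b -> ab] := cycle_colors_porbits j0 F (mem_porbits s a).
by apply: porbit_const => [x|]; [exact/eqP | rewrite -ab porbit_id].
Qed.

Lemma orbit_coloring_pfamily j0 h :
  (valid_ffun (orbit_coloring h) && perm_fixed (orbit_coloring h))
    && (cycle_colors j0 (orbit_coloring h) == h)
  = (h \in pfamily j0 (porbits s) (fun (c : {set A}) j => isl j == (c \subset X))).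
Proof.
rewrite orbit_coloring_fixed andbT /valid_ffun.
apply/andP/familyP => [[/forallP hX /eqP <-] c | hfam].
  case: ifPn => [sc | nsc]; last by rewrite cycle_colors_out ?inE.
  have [a -> ac] := cycle_colors_porbits j0 (orbit_coloring h) sc.
  by rewrite !inE -ac; have := hX a; rewrite ffunE -(porbit_subset _ sX).
split.
  apply/forallP => a; have := hfam (porbit s a).
  by rewrite mem_porbits ffunE -(porbit_subset _ sX).
apply/eqP/ffunP => c; have := hfam c; case: ifPn => [sc _ | nsc /eqP ->].
  by have [a -> ac] := cycle_colors_porbits j0 (orbit_coloring h) sc; rewrite ffunE ac.
exact: cycle_colors_out.
Qed.

Lemma sum_fixed_valid_ffun_inhabited (R : comRingType) (j0 : C) :
  \sum_(F | valid_ffun F && perm_fixed F) 'X^(ffun_weight F) =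
  \prod_(c in porbits s) \sum_(j | isl j == (c \subset X)) 'X^(#|c| * wt j) :> {poly R}.
Proof.
rewrite (big_distr_big_dep j0) (reindex_onto orbit_coloring (cycle_colors j0)).
  apply: eq_big => [h | h _]; first exact: orbit_coloring_pfamily.
  by rewrite prodrXr ffun_weight_orbit_coloring.
by move=> F /andP [_]; apply: cycle_colorsK.
Qed.

Lemma sum_fixed_valid_ffun (R : comRingType) :
  \sum_(F | valid_ffun F && perm_fixed F) 'X^(ffun_weight F) =
  \prod_(c in porbits s) \sum_(j | isl j == (c \subset X)) 'X^(#|c| * wt j) :> {poly R}.
Proof.
case: (pickP C) => [j0 _ | C0]; first exact: sum_fixed_valid_ffun_inhabited.
case: (pickP A) => [a _ | A0].
  rewrite [LHS]big_pred0 => [|F]; last by have := C0 (F a).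
  by rewrite (bigD1 (porbit s a)) ?mem_porbits //= big_pred0 ?mul0r // => j; have := C0 j.
rewrite [RHS]big_pred0 => [|c]; last by apply/imsetP=> -[a]; have := A0 a.
rewrite (eq_bigl xpredT) => [|F]; last first.
  by apply/andP; split; apply/forallP => a; have := A0 a.
rewrite (eq_bigr (fun=> 1)) => [|F _]; last by rewrite /ffun_weight big_pred0.
by rewrite sumr_const card_ffun (eq_card0 A0).
Qed.

End FixedColorings.

Lemma valid_coloringC (A : finType) (OX OY : Type) (X : {set A}) (phi : coloring A OX OY) :
  valid_coloring X (~: X) phi <-> forall a, is_inl (phi a) = (a \in X).
Proof.
split=> [valid_phi a | phiX a]; first by case: (valid_phi a).
by rewrite inE phiX.
Qed.

Section Recoloring.
Variables (gT : finGroupType) (G : {group gT}) (A : finType).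
Variables (Gamma : {morphism G >-> {perm A}}) (C : finType).

(* Acting through g^-1 makes this a right action, as MathComp actions are. *)
Definition recolor (F : {ffun A -> C}) (g : gT) : {ffun A -> C} :=
  [ffun a => F (Gamma (g^-1)%g a)].

Lemma recolor_is_action : is_action G recolor.
Proof.
split=> [g F1 F2 eqF | F g h Gg Gh]; apply/ffunP => a.
  by have /ffunP/(_ ((Gamma (g^-1)%g)^-1%g a)) := eqF; rewrite !ffunE permKV.
by rewrite !ffunE invMg morphM ?groupV // permM.
Qed.

Definition recolor_action := Action recolor_is_action.

Lemma recolor_fix g F : g \in G ->
  (F \in ('Fix_recolor_action[g])%g) = perm_fixed (Gamma g) F.
Proof.
move=> Gg; apply/afix1P/forallP => [fixF a | fixF].
  by rewrite -{1}fixF /= ffunE morphV // permK.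
by apply/ffunP => a; rewrite ffunE morphV // -[in RHS](permKV (Gamma g) a) (eqP (fixF _)).
Qed.

Variables (X : {set A}) (isl : C -> bool) (wt : C -> nat).
Hypothesis GammaX : forall g, g \in G -> {mono Gamma g : a / a \in X}.

Lemma valid_ffun_recolor g F : g \in G -> valid_ffun X isl (recolor F g) = valid_ffun X isl F.
Proof.
move=> Gg; apply/forallP/forallP => validF a; last by rewrite ffunE -(GammaX (groupVr Gg)).
by have := validF (Gamma g a); rewrite ffunE morphV // permK GammaX.
Qed.

Lemma ffun_weight_recolor g F : ffun_weight wt (recolor F g) = ffun_weight wt F.
Proof.
rewrite /ffun_weight (reindex_inj (@perm_inj _ (Gamma (g^-1)%g)^-1%g)) /=.
by apply: eq_bigr => a _; rewrite ffunE permKV.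
Qed.

Variable w : nat.

Definition colorings_of_weight := [set F | valid_ffun X isl F & ffun_weight wt F == w].

Lemma recolor_acts : [acts G, on colorings_of_weight | recolor_action].
Proof.
apply/subsetP => g Gg; rewrite !inE Gg; apply/subsetP => F.
by rewrite !inE /= valid_ffun_recolor ?ffun_weight_recolor.
Qed.

Lemma card_fix_recolor g : g \in G ->
  #|('Fix_(colorings_of_weight | recolor_action)[g])%g|%:R =
  (\sum_(F | valid_ffun X isl F && perm_fixed (Gamma g) F) 'X^(ffun_weight wt F))`_w
  :> rat.
Proof.
move=> Gg; rewrite coef_sum_Xn; congr _%:R; apply: eq_card => F.
by rewrite in_setI recolor_fix // !inE /= andbAC.
Qed.

Lemma card_orbits_recolor :
  #|orbit_transversal recolor_action G colorings_of_weight|%:R =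
  #|G|%:R^-1 * \sum_(g in G)
     (\sum_(F | valid_ffun X isl F && perm_fixed (Gamma g) F) 'X^(ffun_weight wt F))`_w
  :> rat.
Proof.
have [trans _ _ _] := orbit_transversalP recolor_acts.
rewrite -(eq_bigr _ card_fix_recolor) -natr_sum Frobenius_Cauchy ?recolor_acts //.
by rewrite natrM -(card_transversal trans) [_ * #|G|%:R]mulrC mulKf // pnatr_eq0 -lt0n cardG_gt0.
Qed.

Variables (OX OY : Type) (omX : OX -> nat) (omY : OY -> nat) (emb : C -> OX + OY).
Hypotheses (emb_inj : injective emb) (emb_isl : forall j, is_inl (emb j) = isl j).
Hypothesis emb_wt : forall j, color_weight omX omY (emb j) = wt j.
Hypothesis emb_onto : forall c, (color_weight omX omY c <= w)%N -> exists j, emb j = c.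

Definition coloring_of (F : {ffun A -> C}) : coloring A OX OY := fun a => emb (F a).

Lemma valid_coloring_of F : valid_coloring X (~: X) (coloring_of F) <-> valid_ffun X isl F.
Proof.
split=> [/valid_coloringC validF | /forallP validF].
  by apply/forallP => a; rewrite -emb_isl validF.
by apply/valid_coloringC => a; rewrite emb_isl (eqP (validF a)).
Qed.

Lemma total_weight_coloring_of F : total_weight omX omY (coloring_of F) = ffun_weight wt F.
Proof. by apply: eq_bigr => a _; rewrite emb_wt. Qed.

Lemma coloring_ofP phi :
  valid_coloring X (~: X) phi -> total_weight omX omY phi = w ->
  exists2 F, F \in colorings_of_weight & phi = coloring_of F.
Proof.
move=> valid_phi w_phi.
have /fin_all_exists [F embF] : forall a, exists j, emb j = phi a.
  by move=> a; apply: emb_onto; rewrite -w_phi [X in (_ <= X)%N](bigD1 a) ?leq_addr.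
have phiF : phi = coloring_of [ffun a => F a].
  by apply: functional_extensionality => a; rewrite /coloring_of ffunE embF.
exists [ffun a => F a] => //.
rewrite inE -total_weight_coloring_of -phiF w_phi eqxx andbT.
by apply/valid_coloring_of; rewrite -phiF.
Qed.

Lemma same_orbit_coloring_of F1 F2 :
  same_orbit G Gamma (coloring_of F1) (coloring_of F2) <->
  F2 \in orbit recolor_action G F1.
Proof.
split=> [[g Gg eqF] | /orbitP [g Gg <-]].
  apply/orbitP; exists (g^-1)%g; rewrite ?groupV //; apply/ffunP => a.
  by apply: emb_inj; rewrite ffunE invgK; exact: (congr1 (fun phi => phi a) (esym eqF)).
exists (g^-1)%g; rewrite ?groupV //.
by apply: functional_extensionality => a; rewrite /act_coloring /coloring_of /= ffunE.
Qed.

Lemma num_orbits_colorings :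
  num_orbits (fun phi => valid_coloring X (~: X) phi /\ total_weight omX omY phi = w)
    (same_orbit G Gamma) #|orbit_transversal recolor_action G colorings_of_weight|.
Proof.
have [_ subTS orbit_eq cover] := orbit_transversalP recolor_acts.
exists (fun i => coloring_of (enum_val i)); split; [|split].
- move=> i; have := subsetP subTS _ (enum_valP i); rewrite inE => /andP [validF /eqP wF].
  by split; [exact/valid_coloring_of | rewrite total_weight_coloring_of].
- move=> i j /same_orbit_coloring_of.
  by rewrite orbit_eq ?enum_valP // => /eqP /enum_val_inj.
move=> phi [valid_phi w_phi]; have [F SF ->] := coloring_ofP valid_phi w_phi.
have [g Gg TFg] := cover F SF; exists (enum_rank_in TFg (recolor F g)).
apply/same_orbit_coloring_of; rewrite enum_rankK_in //; apply/orbitP.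
by exists (g^-1)%g; rewrite ?groupV ?actKin.
Qed.
End Recoloring.

Definition bounded_color (f : nat -> nat) (w : nat) := {i : 'I_w.+1 & 'I_(f i)}.

Lemma genfun_enum (O : Type) (om : O -> nat) (f : nat -> nat) (w : nat) :
  is_genfun om f ->
  exists e : bounded_color f w -> O,
    [/\ injective e, forall x, om (e x) = tag x
      & forall c, (om c <= w)%N -> exists x, e x = c].
Proof.
move=> hf; have [e he] := fin_all_exists (fun i : 'I_w.+1 => hf i).
have e_wt (x : bounded_color f w) : om (e (tag x) (tagged x)) = tag x.
  by apply/(he _).2; exists (tagged x).
exists (fun x => e (tag x) (tagged x)); split=> // [[i j] [i' j'] /= eq_e | c].
  have /val_inj eq_i : i = i' :> nat.
    by have := e_wt (Tagged _ j'); rewrite /= -eq_e (e_wt (Tagged _ j)).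
  by subst i'; rewrite ((he i).1 j j' eq_e).
rewrite -ltnS => lt_cw; have [j ejc] := proj1 ((he (Ordinal lt_cw)).2 c) erefl.
by exists (Tagged (fun i : 'I_w.+1 => 'I_(f i)) j).
Qed.

Lemma sum_bounded_colors (f : nat -> nat) (w k : nat) :
  \sum_(x : bounded_color f w) 'X^(k * tag x) = genfun_poly w f k.
Proof.
rewrite /genfun_poly (eq_bigr (fun i : 'I_w.+1 => \sum_(j : 'I_(f i)) 'X^(k * i))) => [|i _].
  by rewrite sig_big_dep.
by rewrite sumr_const card_ord scaler_nat.
Qed.

Section BipartiteColors.
Variables (OX OY : Type) (omX : OX -> nat) (omY : OY -> nat) (fX fY : nat -> nat) (w : nat).
Variables (eX : bounded_color fX w -> OX) (eY : bounded_color fY w -> OY).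
Hypotheses (eX_inj : injective eX) (eX_weight : forall x, omX (eX x) = tag x).
Hypotheses (eY_inj : injective eY) (eY_weight : forall y, omY (eY y) = tag y).
Hypothesis eX_onto : forall c, (omX c <= w)%N -> exists x, eX x = c.
Hypothesis eY_onto : forall c, (omY c <= w)%N -> exists y, eY y = c.

Local Notation colors := (bounded_color fX w + bounded_color fY w)%type.

Definition bicolor (j : colors) : OX + OY :=
  match j with inl x => inl (eX x) | inr y => inr (eY y) end.

Definition bicolor_weight (j : colors) : nat :=
  match j with inl x => tag x | inr y => tag y end.

Lemma bicolor_inj : injective bicolor.
Proof.
by case=> [x|y] [x'|y'] //= [eq_xy]; [rewrite (eX_inj eq_xy) | rewrite (eY_inj eq_xy)].
Qed.

Lemma is_inl_bicolor j : is_inl (bicolor j) = is_inl j.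
Proof. by case: j. Qed.

Lemma color_weight_bicolor j : color_weight omX omY (bicolor j) = bicolor_weight j.
Proof. by case: j => [x|y] /=; rewrite ?eX_weight ?eY_weight. Qed.

Lemma bicolor_onto c : (color_weight omX omY c <= w)%N -> exists j, bicolor j = c.
Proof.
case: c => [x /eX_onto [x' <-] | y /eY_onto [y' <-]].
  by exists (inl x').
by exists (inr y').
Qed.

Lemma coef_fixed_colorings (A : finType) (X : {set A}) (s : {perm A}) :
  {mono s : a / a \in X} ->
  (\sum_(F : {ffun A -> colors} | valid_ffun X (@is_inl _ _) F && perm_fixed s F)
      'X^(ffun_weight bicolor_weight F))`_w =
  psprod ([seq psexp (pssubst_pow (fun i => (fX i)%:R) k) (ncycles_in s X k)
             | k <- iota 1 #|A|] ++
          [seq psexp (pssubst_pow (fun i => (fY i)%:R) k) (ncycles_in s (~: X) k)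
             | k <- iota 1 #|A|]) w.
Proof.
move=> sX; rewrite sum_fixed_valid_ffun; last by move=> a; rewrite sX.
rewrite prod_porbits_cycle_type //.
have sum_inl k : \sum_(j : colors | is_inl j) 'X^(k * bicolor_weight j) = genfun_poly w fX k.
  by rewrite big_sumType /= [X in _ + X]big_pred0 ?addr0 ?sum_bounded_colors.
have sum_inr k : \sum_(j : colors | ~~ is_inl j) 'X^(k * bicolor_weight j) = genfun_poly w fY k.
  by rewrite big_sumType /= [X in X + _]big_pred0 ?add0r ?sum_bounded_colors.
symmetry; apply: psprod_cat_poly_upto (leqnn w) => k; rewrite mem_iota => /andP [k_gt0 _].
  by apply: psexp_poly_upto; rewrite sum_inl; apply: pssubst_pow_poly.
by apply: psexp_poly_upto; rewrite sum_inr; apply: pssubst_pow_poly.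
Qed.
End BipartiteColors.

Theorem theorem1 (gT : finGroupType) (G : {group gT}) (A : finType)
  (Gamma : {morphism G >-> {perm A}}) (X Y : {set A})
  (hXY : X :&: Y = set0) (hXY' : X :|: Y = [set: A])
  (hpres : forall g a, g \in G ->
     ((Gamma g a \in X) = (a \in X)) /\ ((Gamma g a \in Y) = (a \in Y)))
  (OX OY : Type) (omX : OX -> nat) (omY : OY -> nat)
  (homX : forall c, (0 < omX c)%N) (homY : forall c, (0 < omY c)%N)
  (fX fY : nat -> nat) (hfX : is_genfun omX fX) (hfY : is_genfun omY fY) :
  (forall g phi, g \in G -> valid_coloring X Y phi ->
     valid_coloring X Y (act_coloring (OX:=OX) (OY:=OY) (Gamma g) phi)) /\
  (forall w : nat,
     exists n : nat,
     num_orbits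
       (fun phi : coloring A OX OY =>
          valid_coloring X Y phi /\ total_weight omX omY phi = w)
       (same_orbit G Gamma) n /\
     (n%:R : rat) =
       (bip_cycle_index_subst G Gamma X Y
          (fun i => (fX i)%:R) (fun i => (fY i)%:R) w)).
Proof.
have -> : Y = ~: X.
  by apply/setP => a; move/setP/(_ a): hXY; move/setP/(_ a): hXY'; rewrite !inE; case: (a \in X).
have GammaX g : g \in G -> {mono Gamma g : a / a \in X} by move=> Gg a; case: (hpres g a Gg).
split=> [g phi Gg /valid_coloringC valid_phi | w].
  by apply/valid_coloringC => a; rewrite valid_phi GammaX.
have [eX [eX_inj eX_wt eX_onto]] := genfun_enum w hfX.
have [eY [eY_inj eY_wt eY_onto]] := genfun_enum w hfY.
have emb_wt := color_weight_bicolor eX_wt eY_wt.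
have orbits := num_orbits_colorings GammaX (bicolor_inj eX_inj eY_inj)
  (is_inl_bicolor eX eY) emb_wt (bicolor_onto eX_onto eY_onto).
eexists; split; first exact: orbits.
rewrite card_orbits_recolor // /bip_cycle_index_subst; congr (_ * _).
by apply: eq_bigr => g Gg; apply: coef_fixed_colorings; apply: GammaX.
Qed.
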